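(* Let $\mathbb F$ be any field. Every regular $m\times n\times q$ spatial matrix $\mathcal A$ over $\mathbb F$ with $n\le 2$ and $q\le 2$ is equivalent to one of the following spatial matrices (given by their horizontal slices): (1) $\|\,[1]\,\|$ ($1\times1\times1$); (2) $\|I_2\|$ ($2\times2\times1$); (3) $\left\|\begin{bmatrix}1\\0\end{bmatrix}\middle|\begin{bmatrix}0\\1\end{bmatrix}\right\|$ ($2\times1\times2$); (4) $\|[1\ 0]\,|\,[0\ 1]\|$ ($1\times2\times2$); (5) $\left\|\begin{bmatrix}1&0\\0&1\\0&0\end{bmatrix}\middle|\begin{bmatrix}0&0\\0&0\\0&1\end{bmatrix}\right\|$ ($3\times2\times2$); (6) $\left\|\begin{bmatrix}1&0\\0&1\\0&0\end{bmatrix}\middle|\begin{bmatrix}0&0\\1&0\\0&1\end{bmatrix}\right\|$ ($3\times2\times2$); (7) $\left\|\begin{bmatrix}1&0\\0&1\\0&0\\0&0\end{bmatrix}\middle|\begin{bmatrix}0&0\\0&0\\1&0\\0&1\end{bmatrix}\right\|$ ($4\times2\times2$); (8) $\mathcal A(v):=\left\|\begin{bmatrix}1&0\\0&1\end{bmatrix}\middle|\begin{bmatrix}0&v\\1&0\end{bmatrix}\right\|$ with $v\in\mathbb F$ ($2\times2\times2$); (9) only when $\operatorname{char}\mathbb F=2$: $\mathcal B(v):=\left\|\begin{bmatrix}1&0\\0&1\end{bmatrix}\middle|\begin{bmatrix}0&v\\1&1\end{bmatrix}\right\|$ with $v\in\mathbb F$ ($2\times2\times2$). These spatial matrices are pairwise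 inequivalent except for the following cases: - If $\operatorname{char}\mathbb F\ne2$, then $\mathcal A(v)$ is equivalent to each $\mathcal A(v')$ with $v'=vz$ for some nonzero $z\in\{a^2: a\in\mathbb F\}$. - If $\operatorname{char}\mathbb F=2$, then $\mathcal A(v)$ is equivalent to each $\mathcal A(v')$ with $v'=\frac{\alpha v+\beta}{\gamma v+\delta}$, where $\alpha,\beta,\gamma,\delta\in\{a^2:a\in\mathbb F\}$, $\alpha\delta+\beta\gamma\ne0$ and $\gamma v+\delta\ne0$; and $\mathcal B(v)$ is equivalent to each $\mathcal B(v')$ with $v'=v+\beta+\beta^2$ for some $\beta\in\mathbb F$. In particular, if $\mathbb F$ is algebraically closed, then every regular $m\times n\times q$ spatial matrix with $n\le2$ and $q\le2$ is equivalent to exactly one of the spatial matrices (1)–(7), $\mathcal A(0)$, and $\left\|\begin{bmatrix}1&0\\0&0\end{bmatrix}\middle|\begin{bmatrix}0&0\\0&1\end{bmatrix}\right\|$ ($2\times2\times2$).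
   Context: An $m\times n\times q$ spatial matrix over $\mathbb F$ is an array $\mathcal A=[a_{ijk}]$ ($1\le i\le m$, $1\le j\le n$, $1\le k\le q$) with entries in $\mathbb F$; it is written as $\|A_1|\dots|A_q\|$ where $A_k=[a_{ijk}]_{ij}$ ($m\times n$) are its horizontal slices. Two $m\times n\times q$ spatial matrices $[a_{ijk}]$ and $[b_{ijk}]$ are equivalent if there are nonsingular matrices $R=[r_{ii'}]$ ($m\times m$), $S=[s_{jj'}]$ ($n\times n$), $T=[t_{kk'}]$ ($q\times q$) with $b_{i'j'k'}=\sum_{i,j,k}a_{ijk}r_{ii'}s_{jj'}t_{kk'}$ for all $i',j',k'$. The spatial matrix $\mathcal A$ is regular if each of the three sets $\{[a_{ijk}]_{ij}:1\le k\le q\}$ (its $m\times n$ slices), $\{[a_{ijk}]_{ik}:1\le j\le n\}$ (its $m\times q$ slices) and $\{[a_{ijk}]_{jk}:1\le i\le m\}$ (its $n\times q$ slices) is linearly independent (as a family of matrices). *)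

From HB Require Import structures.
From mathcomp Require Import all_boot all_order all_algebra.
Set Implicit Arguments. Unset Strict Implicit. Unset Printing Implicit Defensive.
Import Order.TTheory GRing.Theory Num.Theory.
Local Open Scope ring_scope.

Definition smat (F : fieldType) (m n q : nat) := 'I_m -> 'I_n -> 'I_q -> F.

Definition sm_equiv (F : fieldType) (m n q : nat) (A B : smat F m n q) : Prop :=
  exists (R : 'M[F]_m) (S : 'M[F]_n) (T : 'M[F]_q),
    [/\ R \in unitmx, S \in unitmx, T \in unitmx &
      forall i' j' k',
        B i' j' k' = \sum_(i < m) \sum_(j < n) \sum_(k < q)
                        A i j k * R i i' * S j j' * T k k'].

(* Linear independence of the three families of slices, written out. *)
Definition sm_regular (F : fieldType) (m n q : nat) (A : smat F m n q) : Prop :=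
  [/\
      (forall c : 'I_q -> F,
         (forall i j, \sum_(k < q) c k * A i j k = 0) -> forall k, c k = 0),
      (forall c : 'I_n -> F,
         (forall i k, \sum_(j < n) c j * A i j k = 0) -> forall j, c j = 0) &
      (forall c : 'I_m -> F,
         (forall j k, \sum_(i < m) c i * A i j k = 0) -> forall i, c i = 0)].

(* Names of the canonical spatial matrices: (1)-(7), A(v), B(v), and the
   extra 2x2x2 matrix D := || [1 0;0 0] | [0 0;0 1] || of the last clause. *)
Inductive canon (F : fieldType) : Type :=
| C1 | C2 | C3 | C4 | C5 | C6 | C7
| CA of F | CB of F | CD.

Arguments C1 {F}. Arguments C2 {F}. Arguments C3 {F}. Arguments C4 {F}.
Arguments C5 {F}. Arguments C6 {F}. Arguments C7 {F}. Arguments CD {F}.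

Definition cdims (F : fieldType) (c : canon F) : nat * nat * nat :=
  match c with
  | C1 => (1, 1, 1)%N
  | C2 => (2, 2, 1)%N
  | C3 => (2, 1, 2)%N
  | C4 => (1, 2, 2)%N
  | C5 => (3, 2, 2)%N
  | C6 => (3, 2, 2)%N
  | C7 => (4, 2, 2)%N
  | CA _ => (2, 2, 2)%N
  | CB _ => (2, 2, 2)%N
  | CD => (2, 2, 2)%N
  end.

Definition b2F (F : fieldType) (b : bool) : F := if b then 1 else 0.

(* entry a_{ijk} (0-based, i row, j column, k slice) *)
Definition centry (F : fieldType) (c : canon F) (i j k : nat) : F :=
  match c with
  | C1 => b2F F [&& i == 0, j == 0 & k == 0]%N
  | C2 => b2F F (i == j)%N
  | C3 => b2F F (i == k)%N
  | C4 => b2F F (j == k)%N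
  | C5 => if k == 0%N then b2F F (i == j)%N else b2F F ((i == 2) && (j == 1))%N
  | C6 => if k == 0%N then b2F F (i == j)%N else b2F F (i == j.+1)%N
  | C7 => if k == 0%N then b2F F (i == j)%N else b2F F (i == j.+2)%N
  | CA v => if k == 0%N then b2F F (i == j)%N
            else if ((i == 0) && (j == 1))%N then v
            else b2F F ((i == 1) && (j == 0))%N
  | CB v => if k == 0%N then b2F F (i == j)%N
            else if ((i == 0) && (j == 1))%N then v
            else b2F F (i == 1)%N
  | CD => if k == 0%N then b2F F ((i == 0) && (j == 0))%N
          else b2F F ((i == 1) && (j == 1))%N
  end.

Definition equiv_to (F : fieldType) (m n q : nat) (A : smat F m n q)
    (c : canon F) : Prop :=
  cdims c = (m, n, q) /\
  sm_equiv A (fun (i : 'I_m) (j : 'I_n) (k : 'I_q) => centry c i j k).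

Definition cequiv (F : fieldType) (c c' : canon F) : Prop :=
  let: (m, n, q) := cdims c in
  equiv_to (fun (i : 'I_m) (j : 'I_n) (k : 'I_q) => centry c i j k) c'.

Definition is_square (F : fieldType) (z : F) : Prop := exists a : F, z = a ^+ 2.

Definition in_list (F : fieldType) (c : canon F) : Prop :=
  match c with
  | CB _ => 2%N \in [pchar F]
  | CD => False
  | _ => True
  end.

Definition in_list_ac (F : fieldType) (c : canon F) : Prop :=
  match c with
  | CA v => v = 0
  | CB _ => False
  | _ => True
  end.

Definition exception (F : fieldType) (c c' : canon F) : Prop :=
  match c, c' with
  | CA v, CA v' =>
      (~ (2%N \in [pchar F]) /\
         exists z, [/\ z != 0, is_square z & v' = v * z])
      \/
      (2%N \in [pchar F] /\
         exists al be ga de : F,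
           [/\ is_square al, is_square be, is_square ga & is_square de] /\
           [/\ al * de + be * ga != 0, ga * v + de != 0 &
                v' = (al * v + be) / (ga * v + de)])
  | CB v, CB v' =>
      2%N \in [pchar F] /\ exists be : F, v' = v + be + be ^+ 2
  | _, _ => False
  end.

From HB Require Import structures.
From mathcomp Require Import all_boot all_order all_algebra.
From mathcomp Require Import ring.
Set Implicit Arguments. Unset Strict Implicit. Unset Printing Implicit Defensive.
Import GRing.Theory.
Local Open Scope ring_scope.

(* Regularity forces m <= n q, n <= m q and q <= m n, leaving the shapes 111, 221,
   212, 122, 222, 322 and 422.  When m = n q the n x q slices form a basis of
   'M_(n, q), so all such matrices are equivalent; for 122 the single slice is
   invertible.  A regular 222 matrix is a pencil of 2 x 2 matrices with an
   invertible member X; writing another member as X K with K non-scalar, the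
   pencil is equivalent to (1, companion K), and replacing K by a K + b normalises
   the trace of the companion.  A regular 322 matrix is determined by the nonzero
   2 x 2 matrix N annihilating its mode-1 unfolding, up to N -> S N T^T, hence by
   the rank of N.
   For inequivalence, the determinant of the pencil of a 222 matrix is a binary
   quadratic form which equivalences transform by GL_2 and a nonzero scalar; the
   322 forms (5) and (6) differ in whether a nonzero member of the pencil has a
   nonzero kernel vector. *)

Ltac expand_sums := rewrite ?big_ord_recl ?big_ord0 /= ?mulr0 ?mulr1 ?addr0 ?add0r.
Ltac ring_from h := apply: (etrans _ (etrans h _)); ring.

Section Slices.
Variable F : fieldType.

Definition mn_slice m n q (A : smat F m n q) (k : 'I_q) : 'M[F]_(m, n) :=
  \matrix_(i, j) A i j k.

Definition transformed_slice m n q (R : 'M[F]_m) (S : 'M[F]_n) (T : 'M[F]_q)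
    (A : smat F m n q) (k' : 'I_q) : 'M[F]_(m, n) :=
  R^T *m (\sum_k T k k' *: mn_slice A k) *m S.

Lemma transformed_sliceE m n q (A : smat F m n q) R S T k' i' j' :
  transformed_slice R S T A k' i' j' =
  \sum_(i < m) \sum_(j < n) \sum_(k < q) A i j k * R i i' * S j j' * T k k'.
Proof.
rewrite mxE; under eq_bigr => j _ do rewrite mxE mulr_suml.
rewrite exchange_big /=; apply: eq_bigr => i _; apply: eq_bigr => j _.
rewrite !mxE summxE mulr_sumr mulr_suml; apply: eq_bigr => k _.
by rewrite !mxE; ring.
Qed.

Lemma sm_equiv_slicesP m n q (A B : smat F m n q) :
  sm_equiv A B <->
  exists R S T, [/\ R \in unitmx, S \in unitmx, T \in unitmx &
                    forall k', mn_slice B k' = transformed_slice R S T A k'].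
Proof.
split=> [[R [S [T [uR uS uT H]]]] | [R [S [T [uR uS uT H]]]]];
  exists R, S, T; split=> // k'.
  by apply/matrixP => i' j'; rewrite transformed_sliceE mxE H.
by move=> i' j'; rewrite -transformed_sliceE -H mxE.
Qed.

Lemma sm_equiv_of_slices m n q (A B : smat F m n q) R S T :
  R \in unitmx -> S \in unitmx -> T \in unitmx ->
  (forall k', mn_slice B k' = transformed_slice R S T A k') -> sm_equiv A B.
Proof. by move=> uR uS uT H; apply/sm_equiv_slicesP; exists R, S, T. Qed.

Lemma transformed_slice1 m n q (A : smat F m n q) k :
  transformed_slice 1%:M 1%:M 1%:M A k = mn_slice A k.
Proof.
rewrite /transformed_slice trmx1 mul1mx mulmx1 (bigD1 k) //= big1 ?addr0.
  by rewrite mxE eqxx scale1r.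
by move=> k' /negPf nk; rewrite mxE nk scale0r.
Qed.

Lemma transformed_slice_comp m n q (A : smat F m n q) (R1 R2 : 'M[F]_m)
    (S1 S2 : 'M[F]_n) (T1 T2 : 'M[F]_q) k'' :
  R2^T *m (\sum_k' T2 k' k'' *: transformed_slice R1 S1 T1 A k') *m S2 =
  transformed_slice (R1 *m R2) (S1 *m S2) (T1 *m T2) A k''.
Proof.
have -> : \sum_k' T2 k' k'' *: transformed_slice R1 S1 T1 A k' =
    R1^T *m (\sum_k' T2 k' k'' *: (\sum_k T1 k k' *: mn_slice A k)) *m S1.
  rewrite mulmx_sumr mulmx_suml; apply: eq_bigr => k' _.
  by rewrite -scalemxAr -scalemxAl.
have -> : \sum_k' T2 k' k'' *: (\sum_k T1 k k' *: mn_slice A k) =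
    \sum_k (T1 *m T2) k k'' *: mn_slice A k.
  under eq_bigr => k' _ do rewrite scaler_sumr.
  rewrite exchange_big /=; apply: eq_bigr => k _.
  rewrite mxE scaler_suml; apply: eq_bigr => k' _.
  by rewrite scalerA mulrC.
by rewrite /transformed_slice trmx_mul !mulmxA.
Qed.

Lemma sm_equiv_refl m n q (A : smat F m n q) : sm_equiv A A.
Proof.
apply: (sm_equiv_of_slices (R := 1%:M) (S := 1%:M) (T := 1%:M));
  by rewrite ?unitmx1 // => k; rewrite transformed_slice1.
Qed.

Lemma sm_equiv_trans m n q (A B C : smat F m n q) :
  sm_equiv A B -> sm_equiv B C -> sm_equiv A C.
Proof.
move=> /sm_equiv_slicesP [R1 [S1 [T1 [uR1 uS1 uT1 H1]]]].
move=> /sm_equiv_slicesP [R2 [S2 [T2 [uR2 uS2 uT2 H2]]]].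
apply: (sm_equiv_of_slices (R := R1 *m R2) (S := S1 *m S2) (T := T1 *m T2));
  rewrite ?unitmx_mul ?uR1 ?uR2 ?uS1 ?uS2 ?uT1 ?uT2 // => k''.
rewrite H2 -transformed_slice_comp; congr (_ *m _ *m _).
by apply: eq_bigr => k' _; rewrite H1.
Qed.

Lemma sm_equiv_sym m n q (A B : smat F m n q) : sm_equiv A B -> sm_equiv B A.
Proof.
move=> /sm_equiv_slicesP [R [S [T [uR uS uT H]]]].
apply: (sm_equiv_of_slices (R := invmx R) (S := invmx S) (T := invmx T));
  rewrite ?unitmx_inv // => k.
have := transformed_slice_comp A R (invmx R) S (invmx S) T (invmx T) k.
rewrite (mulmxV uR) (mulmxV uS) (mulmxV uT) transformed_slice1 => <-.
rewrite [RHS]/transformed_slice; congr (_ *m _ *m _).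
by apply: eq_bigr => k' _; rewrite H.
Qed.

End Slices.

Section Matrix22.
Variable F : fieldType.

Lemma ord2P (i : 'I_2) : i = 0 \/ i = 1.
Proof. by case: i => [[|[|//]] Hi]; [left|right]; apply/val_inj. Qed.

Lemma ord2_liftP (i : 'I_2) : i = ord0 \/ i = lift ord0 ord0.
Proof. by case: i => [[|[|//]] Hi]; [left|right]; apply/val_inj. Qed.

Lemma ord3_liftP (i : 'I_3) :
  [\/ i = ord0, i = lift ord0 ord0 | i = lift ord0 (lift ord0 ord0)].
Proof.
by case: i => [[|[|[|//]]] Hi]; [constructor 1|constructor 2|constructor 3];
  apply/val_inj.
Qed.

Lemma ord4_liftP (i : 'I_4) :
  [\/ i = ord0, i = lift ord0 ord0, i = lift ord0 (lift ord0 ord0)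
    | i = lift ord0 (lift ord0 (lift ord0 ord0))].
Proof.
by case: i => [[|[|[|[|//]]]] Hi];
  [constructor 1|constructor 2|constructor 3|constructor 4]; apply/val_inj.
Qed.

Lemma big_ord2 (V : nmodType) (f : 'I_2 -> V) : \sum_i f i = f 0 + f 1.
Proof.
by rewrite !big_ord_recl big_ord0 addr0; congr (f _ + f _); apply/val_inj.
Qed.

Lemma mx22P (A B : 'M[F]_2) : A 0 0 = B 0 0 -> A 0 1 = B 0 1 ->
  A 1 0 = B 1 0 -> A 1 1 = B 1 1 -> A = B.
Proof.
move=> h00 h01 h10 h11; apply/matrixP => i j.
by case: (ord2P i) => ->; case: (ord2P j) => ->.
Qed.

Lemma mulmx22E (A B : 'M[F]_2) i j : (A *m B) i j = A i 0 * B 0 j + A i 1 * B 1 j.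
Proof. by rewrite mxE big_ord2. Qed.

Lemma det_mx22 (A : 'M[F]_2) : \det A = A 0 0 * A 1 1 - A 0 1 * A 1 0.
Proof.
rewrite (expand_det_row A 0) big_ord2 /cofactor !det_mx11 !mxE /=.
rewrite expr0 expr1 mul1r mulN1r; congr (_ + _).
  by congr (_ * _); congr (A _ _); apply/val_inj.
by rewrite mulrN; congr (- (_ * _)); congr (A _ _); apply/val_inj.
Qed.

Lemma mxtrace_mx22 (A : 'M[F]_2) : \tr A = A 0 0 + A 1 1.
Proof. by rewrite /mxtrace big_ord2. Qed.

Lemma unitmx_det_neq0 n (A : 'M[F]_n) : (A \in unitmx) = (\det A != 0).
Proof. by rewrite unitmxE unitfE. Qed.

Definition mx22 (a b c d : F) : 'M[F]_2 :=
  \matrix_(i, j) if i == 0 then (if j == 0 then a else b)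
                 else (if j == 0 then c else d).

Definition companion22 (N : 'M[F]_2) := mx22 0 (- \det N) 1 (\tr N).

(* The basis [u, N u]: for non-scalar N some u makes it invertible, and it then
   conjugates N to [companion22 N]. *)
Definition krylov22 (N : 'M[F]_2) (u0 u1 : F) :=
  mx22 u0 (N 0 0 * u0 + N 0 1 * u1) u1 (N 1 0 * u0 + N 1 1 * u1).

Lemma mul_krylov22_companion N u0 u1 :
  N *m krylov22 N u0 u1 = krylov22 N u0 u1 *m companion22 N.
Proof.
by apply: mx22P; rewrite /companion22 det_mx22 mxtrace_mx22 !mulmx22E !mxE /=; ring.
Qed.

Definition scalar_mx22 (N : 'M[F]_2) := [&& N 0 1 == 0, N 1 0 == 0 & N 0 0 == N 1 1].

Lemma krylov22_unit (N : 'M[F]_2) : ~~ scalar_mx22 N ->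
  exists u0 u1, krylov22 N u0 u1 \in unitmx.
Proof.
move=> nsc; have detE u0 u1 : \det (krylov22 N u0 u1) =
    u0 * (N 1 0 * u0 + N 1 1 * u1) - (N 0 0 * u0 + N 0 1 * u1) * u1.
  by rewrite det_mx22 !mxE.
have [h10|h10] := eqVneq (N 1 0) 0; last first.
  exists 1, 0; rewrite unitmx_det_neq0 detE.
  by have -> : 1 * (N 1 0 * 1 + N 1 1 * 0) - (N 0 0 * 1 + N 0 1 * 0) * 0 = N 1 0
    by ring.
have [h01|h01] := eqVneq (N 0 1) 0; last first.
  exists 0, 1; rewrite unitmx_det_neq0 detE.
  have -> : 0 * (N 1 0 * 0 + N 1 1 * 1) - (N 0 0 * 0 + N 0 1 * 1) * 1 = - N 0 1
    by ring.
  by rewrite oppr_eq0.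
exists 1, 1; rewrite unitmx_det_neq0 detE h10 h01.
have -> : 1 * (0 * 1 + N 1 1 * 1) - (N 0 0 * 1 + 0 * 1) * 1 = N 1 1 - N 0 0 by ring.
by rewrite subr_eq0 eq_sym; move: nsc; rewrite /scalar_mx22 h10 h01 !eqxx.
Qed.

End Matrix22.

Section Regular.
Variable F : fieldType.

Lemma regular_lker0 m n q (A : smat F m n q) : sm_regular A ->
  forall r : 'rV_m, (forall k, r *m mn_slice A k = 0) -> r = 0.
Proof.
case=> _ _ h r H; apply/rowP => i; rewrite mxE.
apply: (h (fun i => r 0 i)) => j k.
move/matrixP: (H k) => /(_ 0 j); rewrite !mxE => E; apply: (etrans _ E).
by apply: eq_bigr => i' _; rewrite mxE.
Qed.

Lemma regular_rker0 m n q (A : smat F m n q) : sm_regular A ->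
  forall u : 'cV_n, (forall k, mn_slice A k *m u = 0) -> u = 0.
Proof.
case=> _ h _ u H; apply/colP => j; rewrite mxE.
apply: (h (fun j => u j 0)) => i k.
move/matrixP: (H k) => /(_ i 0); rewrite !mxE => E; apply: (etrans _ E).
by apply: eq_bigr => j' _; rewrite mxE mulrC.
Qed.

Lemma regular_mn_slices_free m n q (A : smat F m n q) : sm_regular A ->
  forall c : 'I_q -> F, \sum_k c k *: mn_slice A k = 0 -> forall k, c k = 0.
Proof.
case=> h _ _ c H; apply: h => i j.
move/matrixP: H => /(_ i j); rewrite !mxE summxE => E; apply: (etrans _ E).
by apply: eq_bigr => k _; rewrite !mxE.
Qed.

Lemma mx22_rank1 (N : 'M[F]_2) : N != 0 -> \det N = 0 -> \rank N = 1%N.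
Proof.
move=> N0 dN; have := rank_leq_row N; rewrite -mxrank_eq0 in N0.
have : \rank N != 2%N.
  by apply: contra_eqN dN => rN2; rewrite -unitmx_det_neq0 -row_free_unit.
by case: (\rank N) N0 => [|[|[|]]].
Qed.

Lemma det_mulmx3_eq0 n (L X U : 'M[F]_n) : \det L != 0 -> \det U != 0 ->
  \det (L *m X *m U) = 0 -> \det X = 0.
Proof.
move=> dL dU /eqP; rewrite !det_mulmx !mulf_eq0 (negPf dL) (negPf dU) orbF.
by move/eqP.
Qed.

Lemma mulmx_delta1_eq0 (M : 'M[F]_2) :
  M 0 1 = 0 -> M 1 1 = 0 -> M *m (delta_mx 1 0 : 'cV_2) = 0.
Proof.
move=> h01 h11; apply/colP => i; rewrite !mxE big_ord2 !mxE /=.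
by case: (ord2P i) => ->; rewrite ?h01 ?h11 /=; ring.
Qed.

Lemma delta1_mulmx_eq0 (M : 'M[F]_2) :
  M 1 0 = 0 -> M 1 1 = 0 -> (delta_mx 0 1 : 'rV_2) *m M = 0.
Proof.
move=> h10 h11; apply/rowP => j; rewrite !mxE big_ord2 !mxE /=.
by case: (ord2P j) => ->; rewrite ?h10 ?h11 /=; ring.
Qed.

(* After normalising one slice to [pid_mx 1], a singular pencil forces this shape. *)
Lemma singular_pencil_pid1 (N : 'M[F]_2) :
  \det N = 0 -> \det (pid_mx 1 + N) = 0 -> N 1 1 = 0 /\ N 0 1 * N 1 0 = 0.
Proof.
rewrite !det_mx22 !mxE /= => h1 h2.
have N11 : N 1 1 = 0.
  have -> : N 1 1 = (1 + N 0 0) * (0 + N 1 1) - (0 + N 0 1) * (0 + N 1 0)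
                    - (N 0 0 * N 1 1 - N 0 1 * N 1 0) by ring.
  by rewrite h1 h2 subrr.
split=> //; have -> : N 0 1 * N 1 0 = N 0 0 * N 1 1 - (N 0 0 * N 1 1 - N 0 1 * N 1 0)
  by ring.
by rewrite h1 N11 mulr0 subrr.
Qed.

Lemma regular222_pencil_nonsingular (A : smat F 2 2 2) : sm_regular A ->
  \det (mn_slice A 0) = 0 -> \det (mn_slice A 1) = 0 ->
  \det (mn_slice A 0 + mn_slice A 1) = 0 -> False.
Proof.
move=> reg d0 d1 d01.
set A0 := mn_slice A 0 in d0 d01; set A1 := mn_slice A 1 in d1 d01.
have A0n0 : A0 != 0.
  apply/eqP => A00; have := regular_mn_slices_free reg (c := fun k => (k == 0)%:R).
  rewrite big_ord2 /= scale1r scale0r addr0 -/A0 A00 => /(_ erefl 0) /=.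
  by move/eqP; rewrite oner_eq0.
set L := col_ebase A0; set U := row_ebase A0.
have uL : L \in unitmx by apply: col_ebase_unit.
have uU : U \in unitmx by apply: row_ebase_unit.
have dL : \det L != 0 by rewrite -unitmx_det_neq0.
have dU : \det U != 0 by rewrite -unitmx_det_neq0.
have eA0 : A0 = L *m pid_mx 1 *m U.
  by have := mulmx_ebase A0; rewrite (mx22_rank1 A0n0 d0) => ->.
have [N eA1] : exists N, A1 = L *m N *m U.
  by exists (invmx L *m A1 *m invmx U); rewrite !mulmxA mulmxV // mul1mx mulmxKV.
have [N11 /eqP] : N 1 1 = 0 /\ N 0 1 * N 1 0 = 0.
  apply: singular_pencil_pid1; apply: (det_mulmx3_eq0 dL dU).
    by rewrite -eA1.
  by rewrite mulmxDr mulmxDl -eA0 -eA1.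
rewrite mulf_eq0 => /orP[/eqP N01 | /eqP N10].
- have : invmx U *m (delta_mx 1 0 : 'cV_2) = 0.
    apply: (regular_rker0 reg) => k.
    by case: (ord2P k) => -> /=; rewrite -/A0 -/A1 ?eA0 ?eA1 -!mulmxA mulKVmx //;
      rewrite mulmx_delta1_eq0 ?mulmx0 // !mxE.
  move/(congr1 (mulmx U)); rewrite mulKVmx // mulmx0 => /colP /(_ 1).
  by rewrite !mxE /= => /eqP; rewrite oner_eq0.
- have : (delta_mx 0 1 : 'rV_2) *m invmx L = 0.
    apply: (regular_lker0 reg) => k.
    by case: (ord2P k) => -> /=; rewrite -/A0 -/A1 ?eA0 ?eA1 !mulmxA mulmxKV //;
      rewrite delta1_mulmx_eq0 ?mul0mx // !mxE.
  move/(congr1 (mulmx^~ L)); rewrite mulmxKV // mul0mx => /rowP /(_ 1).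
  by rewrite !mxE /= => /eqP; rewrite oner_eq0.
Qed.

Lemma regular222_unit_comb (A : smat F 2 2 2) : sm_regular A ->
  exists a b c d : F,
    a * d - b * c != 0 /\ a *: mn_slice A 0 + b *: mn_slice A 1 \in unitmx.
Proof.
move=> reg; have [d0|d0] := eqVneq (\det (mn_slice A 0)) 0; last first.
  exists 1, 0, 0, 1; rewrite scale1r scale0r addr0 unitmx_det_neq0 d0.
  by rewrite mulr1 mul0r subr0 oner_eq0.
have [d1|d1] := eqVneq (\det (mn_slice A 1)) 0; last first.
  exists 0, 1, 1, 0; rewrite scale1r scale0r add0r unitmx_det_neq0 d1.
  by rewrite mul0r mulr1 sub0r oppr_eq0 oner_eq0.
have [d01|d01] := eqVneq (\det (mn_slice A 0 + mn_slice A 1)) 0.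
  by case: (regular222_pencil_nonsingular reg d0 d1 d01).
exists 1, 1, 0, 1; rewrite !scale1r unitmx_det_neq0 d01.
by rewrite mulr1 mulr0 subr0 oner_eq0.
Qed.

End Regular.

Section Pencil222.
Variable F : fieldType.

Definition csmat (c : canon F) m n q : smat F m n q :=
  fun (i : 'I_m) (j : 'I_n) (k : 'I_q) => centry c i j k.
Arguments csmat : clear implicits.

Lemma mn_slice_CA0 v : mn_slice (csmat (CA v) 2 2 2) 0 = 1%:M.
Proof. by apply: mx22P; rewrite !mxE. Qed.

Lemma mn_slice_CA1 v : mn_slice (csmat (CA v) 2 2 2) 1 = mx22 0 v 1 0.
Proof. by apply: mx22P; rewrite !mxE. Qed.

Lemma mn_slice_CB0 v : mn_slice (csmat (CB v) 2 2 2) 0 = 1%:M.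
Proof. by apply: mx22P; rewrite !mxE. Qed.

Lemma mn_slice_CB1 v : mn_slice (csmat (CB v) 2 2 2) 1 = mx22 0 v 1 1.
Proof. by apply: mx22P; rewrite !mxE. Qed.

Lemma mn_slice_CD0 : mn_slice (csmat CD 2 2 2) 0 = mx22 1 0 0 0.
Proof. by apply: mx22P; rewrite !mxE. Qed.

Lemma mn_slice_CD1 : mn_slice (csmat CD 2 2 2) 1 = mx22 0 0 0 1.
Proof. by apply: mx22P; rewrite !mxE. Qed.

(* If X K = Y for a pencil basis (X, Y) with X invertible, then (X, Y) ~ (1, K)
   and K is similar to its companion matrix through a Krylov basis. *)
Lemma sm_equiv_companion (A B : smat F 2 2 2) a b c d (K : 'M[F]_2) :
  a * d - b * c != 0 -> a *: mn_slice A 0 + b *: mn_slice A 1 \in unitmx ->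
  (a *: mn_slice A 0 + b *: mn_slice A 1) *m K = c *: mn_slice A 0 + d *: mn_slice A 1 ->
  ~~ scalar_mx22 K ->
  mn_slice B 0 = 1%:M -> mn_slice B 1 = companion22 K -> sm_equiv A B.
Proof.
set X := a *: _ + _; set Y := c *: _ + _ => hdet uX hK nsc hB0 hB1.
have [u0 [u1 uP]] := krylov22_unit nsc; set P := krylov22 K u0 u1 in uP.
have uXP : X *m P \in unitmx by rewrite unitmx_mul uX uP.
apply: (sm_equiv_of_slices (R := (invmx (X *m P))^T) (S := P)
                           (T := mx22 a c b d)) => //.
- by rewrite unitmx_tr unitmx_inv.
- by rewrite unitmx_det_neq0 det_mx22 !mxE /= (mulrC c b).
move=> k'; rewrite /transformed_slice trmxK big_ord2 !mxE /=.
case: (ord2P k') => -> /=; first by rewrite hB0 -/X -mulmxA mulVmx.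
rewrite -/Y -hK hB1 -!mulmxA mul_krylov22_companion !mulmxA.
by rewrite -(mulmxA _ X) mulVmx ?mul1mx.
Qed.

Lemma regular222_not_scalar (A : smat F 2 2 2) a b c d (M : 'M[F]_2) :
  sm_regular A -> a * d - b * c != 0 ->
  (a *: mn_slice A 0 + b *: mn_slice A 1) *m M = c *: mn_slice A 0 + d *: mn_slice A 1 ->
  ~~ scalar_mx22 M.
Proof.
set X := a *: _ + _ => reg hdet hM; apply/negP => /and3P[/eqP h01 /eqP h10 /eqP h00].
set s := M 0 0; have eM : M = s%:M.
  by apply: mx22P; rewrite [RHS]mxE /= ?mulr1n ?mulr0n.
have := regular_mn_slices_free reg (c := fun k => if k == 0 then c - s * a else d - s * b).
rewrite big_ord2 /=.
have -> : (c - s * a) *: mn_slice A 0 + (d - s * b) *: mn_slice A 1 = X *m M - s *: X.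
  by rewrite hM; apply/matrixP => i j; rewrite !mxE; ring.
rewrite eM mul_mx_scalar subrr => /(_ erefl) h.
move: hdet; have -> : a * d - b * c = a * (d - s * b) - b * (c - s * a) by ring.
by have := h 0; have := h 1; rewrite /= => -> ->; rewrite !mulr0 subrr eqxx.
Qed.

Lemma mxtrace_scale_shift (M : 'M[F]_2) al be :
  \tr (al *: M + be%:M) = al * \tr M + be + be.
Proof. by rewrite !mxtrace_mx22 !mxE /=; ring. Qed.

Lemma pchar2E : (2%N \in [pchar F]) = ((2%:R : F) == 0).
Proof. by rewrite inE. Qed.

(* The pencil is determined by a matrix Mc up to Mc -> al Mc + be; the trace of
   its companion is then normalised to 0 (characteristic not 2 or trace 0)
   or to 1 (characteristic 2). *)
Lemma regular222_canon (A : smat F 2 2 2) : sm_regular A ->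
  exists c, in_list c /\ cdims c = (2, 2, 2)%N /\ sm_equiv A (csmat c 2 2 2).
Proof.
move=> reg; have [a [b [c [d [hdet uX]]]]] := regular222_unit_comb reg.
set X := a *: _ + _ in uX; set Mc := invmx X *m (c *: mn_slice A 0 + d *: mn_slice A 1).
set tau := \tr Mc.
have shifted al be : al != 0 -> forall B : smat F 2 2 2, mn_slice B 0 = 1%:M ->
    mn_slice B 1 = companion22 (al *: Mc + be%:M) -> sm_equiv A B.
  move=> al0 B hB0 hB1.
  have hdet' : a * (al * d + be * b) - b * (al * c + be * a) != 0.
    have -> : a * (al * d + be * b) - b * (al * c + be * a) =
              al * (a * d - b * c) by ring.
    by rewrite mulf_neq0.
  have hK : X *m (al *: Mc + be%:M) =
            (al * c + be * a) *: mn_slice A 0 + (al * d + be * b) *: mn_slice A 1.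
    rewrite mulmxDr -scalemxAr mulKVmx // mul_mx_scalar.
    by apply/matrixP => i j; rewrite !mxE; ring.
  apply: (sm_equiv_companion hdet' uX hK) => //.
  exact: regular222_not_scalar reg hdet' hK.
have [ch2|nch2] := boolP (2%N \in [pchar F]).
  have two0 : (2%:R : F) = 0 by apply/eqP; rewrite -pchar2E.
  have [t0|t0] := eqVneq tau 0.
    exists (CA (- \det (1 *: Mc + 0%:M))); do 2!split => //.
    apply: (shifted 1 0); rewrite ?oner_eq0 ?mn_slice_CA0 ?mn_slice_CA1 //.
    by rewrite /companion22 mxtrace_scale_shift -/tau t0 mulr0 !add0r.
  exists (CB (- \det (tau^-1 *: Mc + 0%:M))); do 2!split => //.
  apply: (shifted tau^-1 0); rewrite ?invr_eq0 ?mn_slice_CB0 ?mn_slice_CB1 //.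
  by rewrite /companion22 mxtrace_scale_shift -/tau mulVf // !addr0.
have two0 : (2%:R : F) != 0 by rewrite -pchar2E.
exists (CA (- \det (1 *: Mc + (- tau / 2%:R)%:M))); do 2!split => //.
apply: (shifted 1 (- tau / 2%:R)); rewrite ?oner_eq0 ?mn_slice_CA0 ?mn_slice_CA1 //.
by rewrite /companion22 mxtrace_scale_shift -/tau; congr mx22; field.
Qed.

End Pencil222.
Arguments csmat {F} c m n q.

Section Unfolding.
Variable F : fieldType.

Definition nq_slice m n q (A : smat F m n q) (i : 'I_m) : 'M[F]_(n, q) :=
  \matrix_(j, k) A i j k.

Definition nq_slices_free m n q (A : smat F m n q) :=
  forall c : 'I_m -> F,
    (forall j k, \sum_(i < m) c i * A i j k = 0) -> forall i, c i = 0.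

Definition unfold1 m n q (A : smat F m n q) : 'M[F]_(m, n * q) :=
  \matrix_(i, l) mxvec (nq_slice A i) 0 l.

Lemma unfold1E m n q (A : smat F m n q) i j k :
  unfold1 A i (mxvec_index j k) = A i j k.
Proof. by rewrite mxE mxvecE mxE. Qed.

Lemma row_free_unfold1 m n q (A : smat F m n q) :
  nq_slices_free A -> row_free (unfold1 A).
Proof.
move=> free; apply: inj_row_free => v hv; apply/rowP => i; rewrite mxE.
apply: (free (fun i => v 0 i)) => j k.
move/rowP: hv => /(_ (mxvec_index j k)); rewrite !mxE => E; apply: (etrans _ E).
by apply: eq_bigr => i' _; rewrite unfold1E.
Qed.

Lemma nq_slices_free_dim m n q (A : smat F m n q) :
  nq_slices_free A -> (m <= n * q)%N.
Proof.
by move/row_free_unfold1; rewrite /row_free => /eqP <-; apply: rank_leq_col.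
Qed.

Lemma regular_dims m n q (A : smat F m n q) : sm_regular A ->
  [/\ (m <= n * q)%N, (n <= m * q)%N & (q <= m * n)%N].
Proof.
case=> free3 free2 free1; split; first exact: nq_slices_free_dim free1.
  exact: (@nq_slices_free_dim _ _ _ (fun j i k => A i j k)).
exact: (@nq_slices_free_dim _ _ _ (fun k i j => A i j k)).
Qed.

Definition transform23 m n q (S : 'M[F]_n) (T : 'M[F]_q) (A : smat F m n q) :
  smat F m n q := fun i j k => (S^T *m nq_slice A i *m T) j k.

Lemma transform23E m n q (S : 'M[F]_n) (T : 'M[F]_q) (A : smat F m n q) i j' k' :
  transform23 S T A i j' k' = \sum_j \sum_k A i j k * S j j' * T k k'.
Proof.
rewrite /transform23 mxE; under eq_bigr => k _ do rewrite mxE mulr_suml.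
rewrite exchange_big /=; apply: eq_bigr => j _; apply: eq_bigr => k _.
by rewrite !mxE; ring.
Qed.

Lemma nq_slices_free_transform23 m n q (A : smat F m n q) S T :
  S \in unitmx -> T \in unitmx ->
  nq_slices_free A -> nq_slices_free (transform23 S T A).
Proof.
move=> uS uT free c hc; apply: free => j k.
have hsum : S^T *m (\sum_i c i *: nq_slice A i) *m T = 0.
  apply/matrixP => j' k'; rewrite mulmx_sumr mulmx_suml summxE [RHS]mxE.
  apply: etrans (hc j' k'); apply: eq_bigr => i _.
  by rewrite -scalemxAr -scalemxAl mxE.
have : \sum_i c i *: nq_slice A i = 0.
  move/(congr1 (mulmx^~ (invmx T))): hsum; rewrite mulmxK // mul0mx.
  by move/(congr1 (mulmx (invmx S^T))); rewrite mulKmx ?unitmx_tr // mulmx0.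
move/matrixP => /(_ j k); rewrite summxE [RHS]mxE => E; apply: etrans _ E.
by apply: eq_bigr => i _; rewrite !mxE.
Qed.

Lemma sm_equiv_of_unfold1_sub m n q (A B : smat F m n q) S T :
  S \in unitmx -> T \in unitmx ->
  (unfold1 B <= unfold1 (transform23 S T A))%MS -> nq_slices_free B ->
  sm_equiv A B.
Proof.
move=> uS uT /submxP [D eD] /row_free_unfold1 freeB.
have uD : D \in unitmx.
  rewrite -row_free_unit /row_free eqn_leq rank_leq_row /=.
  move: freeB; rewrite /row_free eD => /eqP hr.
  by rewrite -[X in (X <= _)%N]hr; apply: mxrankM_maxl.
exists D^T, S, T; split; rewrite ?unitmx_tr // => i' j' k'.
rewrite -unfold1E eD mxE; apply: eq_bigr => i _.
rewrite unfold1E transform23E mulr_sumr; apply: eq_bigr => j _.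
rewrite mulr_sumr; apply: eq_bigr => k _.
by rewrite mxE; ring.
Qed.

Lemma sm_equiv_full m n q (A B : smat F m n q) :
  nq_slices_free A -> nq_slices_free B -> m = (n * q)%N -> sm_equiv A B.
Proof.
move=> freeA freeB hm.
apply: (@sm_equiv_of_unfold1_sub _ _ _ A B 1%:M 1%:M); rewrite ?unitmx1 //.
apply: submx_full; rewrite /row_full.
have /row_free_unfold1 := nq_slices_free_transform23 (unitmx1 _ _) (unitmx1 _ _) freeA.
by rewrite /row_free => /eqP ->; rewrite hm.
Qed.

End Unfolding.

Section SmallShapes.
Variable F : fieldType.

Lemma nq_slices_free_C1 : nq_slices_free (csmat (F := F) C1 1 1 1).
Proof. by move=> c H i; have := H 0 0; expand_sums; rewrite (ord1 i). Qed.

Lemma nq_slices_free_C2 : nq_slices_free (csmat (F := F) C2 2 2 1).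
Proof.
move=> c H i; have := H 0 0; have := H 1 0; expand_sums => h1 h0.
by case: (ord2_liftP i) => ->.
Qed.

Lemma nq_slices_free_C3 : nq_slices_free (csmat (F := F) C3 2 1 2).
Proof.
move=> c H i; have := H 0 0; have := H 0 1; expand_sums => h1 h0.
by case: (ord2_liftP i) => ->.
Qed.

Lemma nq_slices_free_C5 : nq_slices_free (csmat (F := F) C5 3 2 2).
Proof.
move=> c H i; have := H 0 0; have := H 1 0; have := H 1 1; expand_sums => h2 h1 h0.
by case: (ord3_liftP i) => ->.
Qed.

Lemma nq_slices_free_C6 : nq_slices_free (csmat (F := F) C6 3 2 2).
Proof.
move=> c H i; have := H 0 0; have := H 1 0; have := H 1 1; expand_sums => h2 h1 h0.
by case: (ord3_liftP i) => ->.
Qed.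

Lemma nq_slices_free_C7 : nq_slices_free (csmat (F := F) C7 4 2 2).
Proof.
move=> c H i; have := H 0 0; have := H 1 0; have := H 0 1; have := H 1 1.
by expand_sums => h3 h2 h1 h0; case: (ord4_liftP i) => ->.
Qed.

Lemma regular122_equiv_C4 (A : smat F 1 2 2) : sm_regular A ->
  sm_equiv A (csmat C4 1 2 2).
Proof.
case=> _ free2 _; set X := nq_slice A 0.
have uX : X \in unitmx.
  rewrite -row_free_unit; apply: inj_row_free => v hv; apply/rowP => j; rewrite mxE.
  apply: (free2 (fun j => v 0 j)) => i k; rewrite (ord1 i).
  move/rowP: hv => /(_ k); rewrite !mxE => E; apply: (etrans _ E).
  by apply: eq_bigr => j' _; rewrite mxE.
apply: (sm_equiv_of_unfold1_sub (S := 1%:M) (T := invmx X));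
  rewrite ?unitmx1 ?unitmx_inv //; last first.
  by move=> c H i; have := H 0 0; expand_sums; rewrite (ord1 i).
suff -> : unfold1 (csmat C4 1 2 2) = unfold1 (transform23 1%:M (invmx X) A)
  by apply: submx_refl.
apply/matrixP => i l; case/mxvec_indexP: l => j k.
rewrite !unfold1E (ord1 i) /transform23 trmx1 mul1mx -/X mulmxV // mxE.
by case: (ord2_liftP j) => ->; case: (ord2_liftP k) => ->.
Qed.

Definition annihilates m n q (N : 'M[F]_(n, q)) (A : smat F m n q) :=
  forall i, \sum_j \sum_k A i j k * N j k = 0.

Lemma big_mxvec_index n q (f : 'I_(n * q) -> F) :
  \sum_l f l = \sum_j \sum_k f (mxvec_index j k).
Proof.
rewrite (reindex _ (curry_mxvec_bij _ _)) /= pair_bigA.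
by apply: eq_bigr => -[j k].
Qed.

Lemma unfold1_mul_mxvec m n q (A : smat F m n q) (N : 'M[F]_(n, q)) i :
  (unfold1 A *m (mxvec N)^T) i 0 = \sum_j \sum_k A i j k * N j k.
Proof.
rewrite mxE big_mxvec_index; apply: eq_bigr => j _; apply: eq_bigr => k _.
by rewrite unfold1E mxE mxvecE.
Qed.

Lemma annihilatesP m n q (A : smat F m n q) (N : 'M[F]_(n, q)) :
  annihilates N A <-> unfold1 A *m (mxvec N)^T = 0.
Proof.
split=> [hN | /matrixP hN i]; first by apply/colP => i; rewrite unfold1_mul_mxvec mxE.
by rewrite -unfold1_mul_mxvec hN mxE.
Qed.

Lemma annihilator_exists m n q (A : smat F m n q) : (m < n * q)%N ->
  exists2 N : 'M[F]_(n, q), N != 0 & annihilates N A.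
Proof.
move=> ltm; have : ~~ row_free (unfold1 A)^T.
  rewrite /row_free mxrank_tr; apply: contra_ltnN ltm => /eqP <-.
  exact: rank_leq_row.
rewrite -kermx_eq0 => /rowV0Pn [w /sub_kermxP hw wn0].
exists (vec_mx w); first by rewrite vec_mx_eq0.
by apply/annihilatesP; rewrite vec_mxK -[unfold1 A]trmxK -trmx_mul hw trmx0.
Qed.

Lemma annihilates_transform23 m (A : smat F m 2 2) (N S T : 'M[F]_2) :
  annihilates (S *m N *m T^T) A -> annihilates N (transform23 S T A).
Proof.
move=> hA i; apply: etrans _ (hA i).
rewrite !big_ord2 !transform23E !big_ord2 !mulmx22E !mxE; ring.
Qed.

(* A regular 3 x 2 x 2 matrix is determined up to equivalence by the line
   annihilating the row space of its unfolding. *)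
Lemma sm_equiv322_annihilator (A B : smat F 3 2 2) (N NB S T : 'M[F]_2) :
  sm_regular A -> annihilates N A -> S \in unitmx -> T \in unitmx ->
  S *m NB *m T^T = N -> NB != 0 ->
  nq_slices_free B -> annihilates NB B -> sm_equiv A B.
Proof.
move=> [_ _ freeA] hN uS uT hSNT NB0 freeB hB.
apply: (sm_equiv_of_unfold1_sub uS uT) => //.
set col := (mxvec NB)^T; set AST := transform23 S T A.
have rcol : \rank col = 1%N.
  apply/eqP; rewrite eqn_leq rank_leq_col lt0n mxrank_eq0.
  by rewrite trmx_eq0 mxvec_eq0.
have sA : (unfold1 AST <= kermx col)%MS.
  by apply/sub_kermxP/annihilatesP/annihilates_transform23; rewrite hSNT.
have rA : \rank (unfold1 AST) = 3%N.
  by apply/eqP/row_free_unfold1/nq_slices_free_transform23.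
have kA : (kermx col <= unfold1 AST)%MS.
  by rewrite -(mxrank_leqif_sup sA).2 rA mxrank_ker rcol.
by apply: submx_trans kA; apply/sub_kermxP/annihilatesP.
Qed.

Lemma regular322_canon (A : smat F 3 2 2) : sm_regular A ->
  sm_equiv A (csmat C5 3 2 2) \/ sm_equiv A (csmat C6 3 2 2).
Proof.
move=> reg; have [N N0 hN] := annihilator_exists A (isT : (3 < 2 * 2)%N).
have e01 : mx22 0 1 0 0 != 0 :> 'M[F]_2.
  by apply/eqP => /matrixP /(_ 0 1); rewrite !mxE /= => /eqP; rewrite oner_eq0.
have e10 : mx22 0 1 (-1) 0 != 0 :> 'M[F]_2.
  by apply/eqP => /matrixP /(_ 0 1); rewrite !mxE /= => /eqP; rewrite oner_eq0.
have [dN|dN] := eqVneq (\det N) 0; [left|right].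
- set L := col_ebase N; set U := row_ebase N.
  have eN : N = L *m pid_mx 1 *m U.
    by have := mulmx_ebase N; rewrite (mx22_rank1 N0 dN) => ->.
  apply: (sm_equiv322_annihilator (S := L) (T := (mx22 0 1 1 0 *m U)^T)
    (NB := mx22 0 1 0 0) reg hN) => //.
  + exact: col_ebase_unit.
  + rewrite unitmx_tr unitmx_mul row_ebase_unit andbT unitmx_det_neq0.
    by rewrite det_mx22 !mxE /= mul0r sub0r mulr1 oppr_eq0 oner_eq0.
  + rewrite trmxK eN !mulmxA; congr (_ *m _); rewrite -mulmxA; congr (_ *m _).
    by apply: mx22P; rewrite !mulmx22E !mxE /=; ring.
  + exact: nq_slices_free_C5.
  + by move=> i; case: (ord3_liftP i) => ->; expand_sums; rewrite !mxE /=; ring.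
- apply: (sm_equiv322_annihilator (S := N *m mx22 0 (-1) 1 0) (T := 1%:M)
    (NB := mx22 0 1 (-1) 0) reg hN) => //.
  + rewrite unitmx_mul !unitmx_det_neq0 dN det_mx22 !mxE /=.
    by rewrite mul0r mulr1 sub0r opprK oner_eq0.
  + exact: unitmx1.
  + rewrite trmx1 mulmx1 -mulmxA.
    have -> : mx22 0 (-1) 1 0 *m mx22 0 1 (-1) 0 = 1%:M :> 'M[F]_2.
      by apply: mx22P; rewrite !mulmx22E !mxE /=; ring.
    by rewrite mulmx1.
  + exact: nq_slices_free_C6.
  + by move=> i; case: (ord3_liftP i) => ->; expand_sums; rewrite !mxE /=; ring.
Qed.

End SmallShapes.

Lemma regular_canon_exists (F : fieldType) m n q (A : smat F m n q) :
  (0 < m)%N -> (0 < n)%N -> (0 < q)%N -> (n <= 2)%N -> (q <= 2)%N ->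
  sm_regular A -> exists c : canon F, in_list c /\ equiv_to A c.
Proof.
move=> hm hn hq hn2 hq2 reg; have [hmnq hnmq hqmn] := regular_dims reg.
have freeA : nq_slices_free A by case: reg.
case: n A reg freeA hn hn2 hmnq hnmq hqmn => [|[|[|n]]] // A reg freeA _ _;
case: q A reg freeA hq hq2 => [|[|[|q]]] // A reg freeA _ _;
case: m A reg freeA hm => [|[|[|[|[|m]]]]] // A reg freeA _ hmnq hnmq hqmn.
- exists C1; do 2!split=> //.
  by apply: sm_equiv_full freeA _ _ => //; apply: nq_slices_free_C1.
- exists C3; do 2!split=> //.
  by apply: sm_equiv_full freeA _ _ => //; apply: nq_slices_free_C3.
- exists C2; do 2!split=> //.
  by apply: sm_equiv_full freeA _ _ => //; apply: nq_slices_free_C2.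
- by exists C4; do 2!split => //; apply: regular122_equiv_C4.
- by have [c [hc [hd he]]] := regular222_canon reg; exists c.
- by case: (regular322_canon reg) => h; [exists C5 | exists C6].
- exists C7; do 2!split=> //.
  by apply: sm_equiv_full freeA _ _ => //; apply: nq_slices_free_C7.
Qed.

Section PencilInvariants.
Variable F : fieldType.

Lemma transformed_slice_comb2 m n (A : smat F m n 2) R S (T : 'M[F]_2) x y :
  x *: transformed_slice R S T A 0 + y *: transformed_slice R S T A 1 =
  R^T *m ((x * T 0 0 + y * T 0 1) *: mn_slice A 0 +
          (x * T 1 0 + y * T 1 1) *: mn_slice A 1) *m S.
Proof.
rewrite /transformed_slice !big_ord2.
rewrite [x *: _]scalemxAl [y *: _]scalemxAl -mulmxDl !scalemxAr -mulmxDr.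
by congr (_ *m _ *m _); apply/matrixP => i j; rewrite !mxE; ring.
Qed.

(* The binary quadratic form of the pencil; an equivalence transforms it by
   the 2 x 2 matrix T up to a nonzero scalar. *)
Definition pencil_det m (A : smat F m m 2) (x y : F) :=
  \det (x *: mn_slice A 0 + y *: mn_slice A 1).

Lemma sm_equiv_pencil_det m (A B : smat F m m 2) : sm_equiv A B ->
  exists D a b c d, [/\ D != 0, a * d - b * c != 0 &
    forall x y, pencil_det B x y = D * pencil_det A (x * a + y * c) (x * b + y * d)].
Proof.
move=> /sm_equiv_slicesP [R [S [T [uR uS uT H]]]].
exists (\det R * \det S), (T 0 0), (T 1 0), (T 0 1), (T 1 1); split.
- by rewrite mulf_neq0 // -unitmx_det_neq0.
- by move: uT; rewrite unitmx_det_neq0 det_mx22 mulrC [T 0 1 * _]mulrC.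
move=> x y; rewrite /pencil_det !H transformed_slice_comb2.
by rewrite !det_mulmx det_tr; ring.
Qed.

Lemma pencil_det_CA v x y : pencil_det (csmat (CA v) 2 2 2) x y = x ^+ 2 - v * y ^+ 2.
Proof. by rewrite /pencil_det mn_slice_CA0 mn_slice_CA1 det_mx22 !mxE /=; ring. Qed.

Lemma pencil_det_CB v x y :
  pencil_det (csmat (CB v) 2 2 2) x y = x ^+ 2 + x * y - v * y ^+ 2.
Proof. by rewrite /pencil_det mn_slice_CB0 mn_slice_CB1 det_mx22 !mxE /=; ring. Qed.

Lemma pencil_det_CD x y : pencil_det (csmat CD 2 2 2) x y = x * y.
Proof. by rewrite /pencil_det mn_slice_CD0 mn_slice_CD1 det_mx22 !mxE /=; ring. Qed.

(* Values of the form at (1,0), (0,1) and (1,1). *)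
Lemma sm_equiv_CA_form (v v' : F) :
  sm_equiv (csmat (CA v) 2 2 2) (csmat (CA v') 2 2 2) ->
  exists D a b c d, [/\ D != 0, a * d - b * c != 0, 1 = D * (a ^+ 2 - v * b ^+ 2),
    - v' = D * (c ^+ 2 - v * d ^+ 2) & 2%:R * (D * (a * c - v * b * d)) = 0].
Proof.
move=> /sm_equiv_pencil_det [D [a [b [c [d [D0 dT H]]]]]].
have h10 := H 1 0; have h01 := H 0 1; have h11 := H 1 1.
rewrite !pencil_det_CA in h10 h01 h11.
have e0 : 1 = D * (a ^+ 2 - v * b ^+ 2) by ring_from h10.
have e1 : - v' = D * (c ^+ 2 - v * d ^+ 2) by ring_from h01.
exists D, a, b, c, d; split=> //.
have -> : 2%:R * (D * (a * c - v * b * d)) =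
    D * ((1 * a + 1 * c) ^+ 2 - v * (1 * b + 1 * d) ^+ 2) -
    D * (a ^+ 2 - v * b ^+ 2) - D * (c ^+ 2 - v * d ^+ 2) by ring.
by rewrite -h11 -e0 -e1; ring.
Qed.

Lemma sm_equiv_CA_exception (v v' : F) :
  sm_equiv (csmat (CA v) 2 2 2) (csmat (CA v') 2 2 2) -> exception (CA v) (CA v').
Proof.
move=> /sm_equiv_CA_form [D [a [b [c [d [D0 dT e0 e1 e2]]]]]].
have [ch2|nch2] := boolP (2%N \in [pchar F]); [right|left].
- have two0 := pcharf0 ch2.
  split => //; exists (d ^+ 2), (c ^+ 2), (b ^+ 2), (a ^+ 2); split.
    by split; [exists d|exists c|exists b|exists a].
  have nz : a ^+ 2 - v * b ^+ 2 != 0.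
    by apply/eqP => h; move: e0; rewrite h mulr0 => /eqP; rewrite oner_eq0.
  have E1 : b ^+ 2 * v + a ^+ 2 = a ^+ 2 - v * b ^+ 2 + 2%:R * (v * b ^+ 2) by ring.
  split.
  + have -> : d ^+ 2 * a ^+ 2 + c ^+ 2 * b ^+ 2 =
              (a * d - b * c) ^+ 2 + 2%:R * (a * b * c * d) by ring.
    by rewrite two0 mul0r addr0 expf_neq0.
  + by rewrite E1 two0 mul0r addr0.
  + have -> : d ^+ 2 * v + c ^+ 2 = - (c ^+ 2 - v * d ^+ 2) + 2%:R * c ^+ 2 by ring.
    rewrite E1 two0 !mul0r !addr0; apply: (mulIf nz); rewrite mulfVK //.
    apply: (mulfI D0); rewrite mulrA (mulrC D) -mulrA -e0 mulr1.
    by rewrite mulrN -e1 opprK.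
- have two0 : (2%:R : F) != 0 by rewrite -pchar2E.
  have e3 : a * c - v * b * d = 0.
    by move: e2 => /eqP; rewrite !mulf_eq0 (negPf two0) (negPf D0) => /eqP.
  split; first exact/negP.
  exists ((D * (a * d - b * c)) ^+ 2); split.
  + by rewrite expf_neq0 // mulf_neq0.
  + by exists (D * (a * d - b * c)).
  have -> : v' = - (D * (c ^+ 2 - v * d ^+ 2)) * (D * (a ^+ 2 - v * b ^+ 2)).
    by rewrite -e0 -e1 mulr1 opprK.
  have -> : - (D * (c ^+ 2 - v * d ^+ 2)) * (D * (a ^+ 2 - v * b ^+ 2)) =
      v * (D * (a * d - b * c)) ^+ 2 - D ^+ 2 * (a * c - v * b * d) ^+ 2 by ring.
  by rewrite e3 expr0n /= mulr0 subr0.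
Qed.

Lemma sm_equiv_CB_exception (v v' : F) : 2%N \in [pchar F] ->
  sm_equiv (csmat (CB v) 2 2 2) (csmat (CB v') 2 2 2) -> exception (CB v) (CB v').
Proof.
move=> ch2 /sm_equiv_pencil_det [D [a [b [c [d [D0 dT H]]]]]].
have two0 := pcharf0 ch2.
have h10 := H 1 0; have h01 := H 0 1; have h11 := H 1 1.
rewrite !pencil_det_CB in h10 h01 h11.
have e0 : 1 = D * (a ^+ 2 + a * b - v * b ^+ 2) by ring_from h10.
have e1 : - v' = D * (c ^+ 2 + c * d - v * d ^+ 2) by ring_from h01.
have e2 : 1 + 1 - v' = D * ((a + c) ^+ 2 + (a + c) * (b + d) - v * (b + d) ^+ 2)
  by ring_from h11.
set X := a * c + a * d - v * b * d; set Y := b * c - a * d.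
have eY : D * Y = 1.
  have -> : D * Y = D * ((a + c) ^+ 2 + (a + c) * (b + d) - v * (b + d) ^+ 2)
      - D * (a ^+ 2 + a * b - v * b ^+ 2) - D * (c ^+ 2 + c * d - v * d ^+ 2)
      - 2%:R * (D * X) by rewrite /X /Y; ring.
  by rewrite -e0 -e1 -e2 two0 mul0r subr0; ring.
split => //; exists (D * X).
have -> : v' = - (D * (c ^+ 2 + c * d - v * d ^+ 2)) * (D * (a ^+ 2 + a * b - v * b ^+ 2)).
  by rewrite -e0 -e1 mulr1 opprK.
have -> : - (D * (c ^+ 2 + c * d - v * d ^+ 2)) * (D * (a ^+ 2 + a * b - v * b ^+ 2)) =
    - (D * X) ^+ 2 - (D * X) * (D * Y) + v * (D * Y) ^+ 2 by rewrite /X /Y; ring.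
rewrite eY mulr1 expr1n mulr1.
have -> : - (D * X) ^+ 2 - D * X + v =
    v + D * X + (D * X) ^+ 2 - 2%:R * (D * X + (D * X) ^+ 2) by ring.
by rewrite two0 mul0r subr0.
Qed.

(* In characteristic 2 the form of A(v) is additive, that of B(v) is not. *)
Lemma not_sm_equiv_CA_CB (v v' : F) : 2%N \in [pchar F] ->
  ~ sm_equiv (csmat (CA v) 2 2 2) (csmat (CB v') 2 2 2).
Proof.
move=> ch2 /sm_equiv_pencil_det [D [a [b [c [d [D0 dT H]]]]]].
have h10 := H 1 0; have h01 := H 0 1; have h11 := H 1 1.
rewrite !pencil_det_CB !pencil_det_CA in h10 h01 h11.
have e0 : 1 = D * (a ^+ 2 - v * b ^+ 2) by ring_from h10.
have e1 : - v' = D * (c ^+ 2 - v * d ^+ 2) by ring_from h01.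
have e2 : 1 + 1 - v' = D * ((a + c) ^+ 2 - v * (b + d) ^+ 2) by ring_from h11.
have : (1 : F) = 2%:R * (D * (a * c - v * b * d)).
  have -> : 2%:R * (D * (a * c - v * b * d)) = D * ((a + c) ^+ 2 - v * (b + d) ^+ 2)
      - D * (a ^+ 2 - v * b ^+ 2) - D * (c ^+ 2 - v * d ^+ 2) by ring.
  by rewrite -e0 -e1 -e2; ring.
by rewrite pcharf0 // mul0r => /eqP; rewrite oner_eq0.
Qed.

Lemma not_sm_equiv_CD_CA0 : ~ sm_equiv (csmat (F := F) CD 2 2 2) (csmat (CA 0) 2 2 2).
Proof.
move=> /sm_equiv_pencil_det [D [a [b [c [d [D0 dT H]]]]]].
have h10 := H 1 0; have h01 := H 0 1; have h11 := H 1 1.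
rewrite !pencil_det_CD !pencil_det_CA in h10 h01 h11.
have e0 : 1 = D * (a * b) by ring_from h10.
have e1 : 0 = D * (c * d) by ring_from h01.
have e2 : 1 = D * ((a + c) * (b + d)) by ring_from h11.
have e3 : D * (a * d + c * b) = 0.
  have -> : D * (a * d + c * b) = D * ((a + c) * (b + d)) - D * (a * b) - D * (c * d)
    by ring.
  by rewrite -e0 -e1 -e2; ring.
have /eqP : c * d = 0 by move/esym/eqP: e1; rewrite mulf_eq0 (negPf D0) => /eqP.
rewrite mulf_eq0 => /orP[/eqP c0|/eqP d0].
- move: e3; rewrite c0 mul0r addr0 => /eqP; rewrite mulf_eq0 (negPf D0) /=.
  by move: dT; rewrite c0 mulr0 subr0 => /negPf ->.
- move: e3; rewrite d0 mulr0 add0r => /eqP; rewrite mulf_eq0 (negPf D0) /=.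
  by move: dT; rewrite d0 mulr0 sub0r oppr_eq0 mulrC => /negPf ->.
Qed.

Definition pencil_has_kernel m n (A : smat F m n 2) := exists c0 c1 (u : 'cV[F]_n),
  [/\ (c0 != 0) || (c1 != 0), u != 0 & (c0 *: mn_slice A 0 + c1 *: mn_slice A 1) *m u = 0].

Lemma pencil_has_kernel_equiv m n (A B : smat F m n 2) : sm_equiv A B ->
  pencil_has_kernel B -> pencil_has_kernel A.
Proof.
move=> /sm_equiv_slicesP [R [S [T [uR uS uT H]]]] [c0 [c1 [u [hc hu hB]]]].
set c0' := c0 * T 0 0 + c1 * T 0 1; set c1' := c0 * T 1 0 + c1 * T 1 1.
exists c0', c1', (S *m u); split.
- apply: contraTT hc; rewrite negb_or !negbK => /andP[/eqP d0 /eqP d1].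
  move: uT; rewrite unitmx_det_neq0 det_mx22 => dT.
  have E0 : c0 * (T 0 0 * T 1 1 - T 0 1 * T 1 0) = T 1 1 * c0' - T 0 1 * c1'
    by rewrite /c0' /c1'; ring.
  have E1 : c1 * (T 0 0 * T 1 1 - T 0 1 * T 1 0) = T 0 0 * c1' - T 1 0 * c0'
    by rewrite /c0' /c1'; ring.
  rewrite d0 d1 !mulr0 subr0 in E0 E1.
  move/eqP: E0; move/eqP: E1; rewrite !mulf_eq0 (negPf dT) !orbF => /eqP -> /eqP ->.
  by rewrite eqxx.
- by apply: contraNneq hu => hSu; rewrite -(mulKmx uS u) hSu mulmx0.
have : R^T *m (c0' *: mn_slice A 0 + c1' *: mn_slice A 1) *m (S *m u) = 0.
  by rewrite mulmxA -hB !H transformed_slice_comb2.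
by move/(congr1 (mulmx (invmx R^T))); rewrite mulmx0 -!mulmxA mulKmx ?unitmx_tr.
Qed.

Lemma pencil_has_kernel_C5 : pencil_has_kernel (csmat (F := F) C5 3 2 2).
Proof.
exists 0, 1, (delta_mx 0 0); split.
- by rewrite oner_eq0 eqxx orbT.
- by apply/eqP => /colP /(_ 0); rewrite !mxE /= => /eqP; rewrite oner_eq0.
- apply/colP => i; rewrite !mxE big_ord2 !mxE /=.
  by case: (ord3_liftP i) => -> /=; ring.
Qed.

Lemma not_pencil_has_kernel_C6 : ~ pencil_has_kernel (csmat (F := F) C6 3 2 2).
Proof.
move=> [c0 [c1 [u [hc hu hB]]]].
have E i := congr1 (fun M : 'cV[F]_3 => M i 0) hB.
have E0 := E ord0; have E1 := E (lift ord0 ord0).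
have E2 := E (lift ord0 (lift ord0 ord0)).
rewrite /= !mxE !big_ord2 !mxE /= in E0 E1 E2.
have r0 : c0 * u 0 0 = 0 by ring_from E0.
have r1 : c1 * u 0 0 + c0 * u 1 0 = 0 by ring_from E1.
have r2 : c1 * u 1 0 = 0 by ring_from E2.
move/negP: hu; apply; apply/eqP/colP => i; rewrite mxE.
have [z0|z0] := eqVneq c0 0.
  move: hc; rewrite z0 eqxx /= => z1.
  have v1 : u 1 0 = 0 by move/eqP: r2; rewrite mulf_eq0 (negPf z1) => /eqP.
  have v0 : u 0 0 = 0.
    by move: r1; rewrite v1 mulr0 addr0 => /eqP; rewrite mulf_eq0 (negPf z1) => /eqP.
  by case: (ord2P i) => ->.
have v0 : u 0 0 = 0 by move/eqP: r0; rewrite mulf_eq0 (negPf z0) => /eqP.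
have v1 : u 1 0 = 0.
  by move: r1; rewrite v0 mulr0 add0r => /eqP; rewrite mulf_eq0 (negPf z0) => /eqP.
by case: (ord2P i) => ->.
Qed.

Lemma not_sm_equiv_C5_C6 : ~ sm_equiv (csmat (F := F) C5 3 2 2) (csmat C6 3 2 2).
Proof.
move/sm_equiv_sym/pencil_has_kernel_equiv/(_ pencil_has_kernel_C5).
exact: not_pencil_has_kernel_C6.
Qed.

End PencilInvariants.

Section Constructions.
Variable F : fieldType.

Lemma sm_equiv_CA_square (v r : F) : r != 0 ->
  sm_equiv (csmat (CA v) 2 2 2) (csmat (CA (v * r ^+ 2)) 2 2 2).
Proof.
move=> r0; apply: (@sm_equiv_companion _ _ _ 1 0 0 r (mx22 0 (r * v) r 0)).
- by rewrite mul1r mul0r subr0.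
- rewrite unitmx_det_neq0 mn_slice_CA0 mn_slice_CA1 det_mx22 !mxE /=.
  by apply: contra_neq (oner_neq0 F) => <-; ring.
- by rewrite mn_slice_CA0 mn_slice_CA1; apply: mx22P; rewrite !mulmx22E !mxE /=; ring.
- by rewrite /scalar_mx22 !mxE /= (negPf r0) andbF.
- exact: mn_slice_CA0.
- rewrite mn_slice_CA1 /companion22 mxtrace_mx22 det_mx22 !mxE /=; congr mx22; ring.
Qed.

Lemma sm_equiv_CA_moebius (v a b c d : F) : 2%N \in [pchar F] ->
  a * d - b * c != 0 -> a ^+ 2 - b ^+ 2 * v != 0 ->
  sm_equiv (csmat (CA v) 2 2 2)
           (csmat (CA ((d ^+ 2 * v + c ^+ 2) / (b ^+ 2 * v + a ^+ 2))) 2 2 2).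
Proof.
move=> ch2 hT hD; have two0 := pcharf0 ch2.
set De := a ^+ 2 - b ^+ 2 * v.
apply: (@sm_equiv_companion _ _ _ a b c d
  (mx22 ((a * c - b * d * v) / De) ((a * d - b * c) / De * v)
        ((a * d - b * c) / De) ((a * c - b * d * v) / De))) => //.
- rewrite unitmx_det_neq0 mn_slice_CA0 mn_slice_CA1 det_mx22 !mxE /=.
  by apply: contra_neq hD => <-; ring.
- rewrite mn_slice_CA0 mn_slice_CA1; apply: mx22P; rewrite !mulmx22E !mxE /= /De;
    by field.
- have hr : (a * d - b * c) / De != 0 by rewrite mulf_neq0 ?invr_eq0.
  by rewrite /scalar_mx22 !mxE /= (negPf hr) andbF.
- exact: mn_slice_CA0.
- rewrite mn_slice_CA1 /companion22 mxtrace_mx22 det_mx22 !mxE /=; congr mx22.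
    have -> : b ^+ 2 * v + a ^+ 2 = De + 2%:R * (b ^+ 2 * v) by rewrite /De; ring.
    have -> : d ^+ 2 * v + c ^+ 2 = (d ^+ 2 * v - c ^+ 2) + 2%:R * c ^+ 2 by ring.
    by rewrite two0 !mul0r !addr0 /De; field.
  have -> : (a * c - b * d * v) / De + (a * c - b * d * v) / De =
     2%:R * ((a * c - b * d * v) / De) by ring.
  by rewrite two0 mul0r.
Qed.

Lemma sm_equiv_CB_shift (v be : F) : 2%N \in [pchar F] ->
  sm_equiv (csmat (CB v) 2 2 2) (csmat (CB (v + be + be ^+ 2)) 2 2 2).
Proof.
move=> ch2; have two0 := pcharf0 ch2.
apply: (@sm_equiv_companion _ _ _ 1 0 be 1 (mx22 be v 1 (be + 1))).
- by rewrite !mul1r mul0r subr0 oner_eq0.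
- rewrite unitmx_det_neq0 mn_slice_CB0 mn_slice_CB1 det_mx22 !mxE /=.
  by apply: contra_neq (oner_neq0 F) => <-; ring.
- by rewrite mn_slice_CB0 mn_slice_CB1; apply: mx22P; rewrite !mulmx22E !mxE /=; ring.
- by rewrite /scalar_mx22 !mxE /= oner_eq0 andbF.
- exact: mn_slice_CB0.
- rewrite mn_slice_CB1 /companion22 mxtrace_mx22 det_mx22 !mxE /=; congr mx22.
    have -> : - (be * (be + 1) - v * 1) =
              v + be + be ^+ 2 - 2%:R * (be + be ^+ 2) by ring.
    by rewrite two0 mul0r subr0.
  have -> : be + (be + 1) = 1 + 2%:R * be by ring.
  by rewrite two0 mul0r addr0.
Qed.

Lemma sm_equiv_CD_CA_square (s : F) : ~ (2%N \in [pchar F]) -> s != 0 ->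
  sm_equiv (csmat CD 2 2 2) (csmat (CA (s ^+ 2)) 2 2 2).
Proof.
move=> nch2 s0.
have two0 : (2%:R : F) != 0 by rewrite -pchar2E; apply/negP.
apply: (@sm_equiv_companion _ _ _ 1 1 s (- s) (mx22 s 0 0 (- s))).
- have : - (2%:R * s) != 0 by rewrite oppr_eq0 mulf_neq0.
  by apply: contra_neq => <-; ring.
- rewrite unitmx_det_neq0 mn_slice_CD0 mn_slice_CD1 det_mx22 !mxE /=.
  by apply: contra_neq (oner_neq0 F) => <-; ring.
- by rewrite mn_slice_CD0 mn_slice_CD1; apply: mx22P; rewrite !mulmx22E !mxE /=; ring.
- rewrite /scalar_mx22 !mxE /= !eqxx /=; apply/negP => /eqP h.
  have : 2%:R * s = 0.
    have -> : 2%:R * s = s - - s by ring.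
    by rewrite -h subrr.
  by move/eqP; rewrite mulf_eq0 (negPf two0) (negPf s0).
- by rewrite mn_slice_CA0.
- rewrite mn_slice_CA1 /companion22 mxtrace_mx22 det_mx22 !mxE /=; congr mx22; ring.
Qed.

Lemma sm_equiv_CD_CB0 : 2%N \in [pchar F] ->
  sm_equiv (csmat (F := F) CD 2 2 2) (csmat (CB 0) 2 2 2).
Proof.
move=> ch2.
apply: (@sm_equiv_companion _ _ _ 1 1 0 1 (mx22 0 0 0 1)).
- by rewrite !mul1r subr0 oner_eq0.
- rewrite unitmx_det_neq0 mn_slice_CD0 mn_slice_CD1 det_mx22 !mxE /=.
  by apply: contra_neq (oner_neq0 F) => <-; ring.
- by rewrite mn_slice_CD0 mn_slice_CD1; apply: mx22P; rewrite !mulmx22E !mxE /=; ring.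
- by rewrite /scalar_mx22 !mxE /= eq_sym oner_eq0 !andbF.
- by rewrite mn_slice_CB0.
- rewrite mn_slice_CB1 /companion22 mxtrace_mx22 det_mx22 !mxE /=; congr mx22; ring.
Qed.

End Constructions.

Section Final.
Variable F : fieldType.

Lemma exception_cequiv (c c' : canon F) : exception c c' -> cequiv c c'.
Proof.
case: c => [|||||||v|v|]; case: c' => [|||||||v'|v'|] //=.
  case=> [[nch2 [z [z0 [r hr] ->]]] | [ch2 [al [be [ga [de [hsq [h1 h2 ->]]]]]]]].
    split=> //; rewrite hr; apply: sm_equiv_CA_square.
    by apply: contraNneq z0 => r0; rewrite hr r0 expr0n.
  case: hsq h1 h2 => [[d ->] [c ->] [b ->] [a ->]] h1 h2.
  split=> //; apply: sm_equiv_CA_moebius => //.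
    apply: contraNneq h1 => hT.
    have -> : d ^+ 2 * a ^+ 2 + c ^+ 2 * b ^+ 2 =
              (a * d - b * c) ^+ 2 + 2%:R * (a * b * c * d) by ring.
    by rewrite hT pcharf0 // expr0n mul0r addr0.
  have -> : a ^+ 2 - b ^+ 2 * v = b ^+ 2 * v + a ^+ 2 - 2%:R * (b ^+ 2 * v) by ring.
  by rewrite pcharf0 // mul0r subr0.
by case=> ch2 [be ->]; split=> //; apply: sm_equiv_CB_shift.
Qed.

Lemma canon_cequivP (c c' : canon F) : in_list c -> in_list c' ->
  (cequiv c c' <-> (c = c' \/ exception c c')).
Proof.
move=> hc hc'; split.
- case: c hc => [|||||||v|v|] hc; case: c' hc' => [|||||||v'|v'|] hc' //;
    rewrite /cequiv /= => -[hd he]; try discriminate hd; try by left.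
  + by case: (not_sm_equiv_C5_C6 he).
  + by case: (not_sm_equiv_C5_C6 (sm_equiv_sym he)).
  + by right; apply: sm_equiv_CA_exception.
  + by case: (not_sm_equiv_CA_CB hc' he).
  + by case: (not_sm_equiv_CA_CB hc (sm_equiv_sym he)).
  + by right; apply: sm_equiv_CB_exception.
- case=> [<-|]; last exact: exception_cequiv.
  rewrite /cequiv; case E: (cdims c) => [[m n] q]; split => //.
  exact: sm_equiv_refl.
Qed.

Lemma canon_ac_uniq m n q (c c' : canon F) : in_list_ac c -> in_list_ac c' ->
  cdims c = (m, n, q) -> cdims c' = (m, n, q) ->
  sm_equiv (csmat c m n q) (csmat c' m n q) -> c' = c.
Proof.
case: c => [|||||||v|v|]; case: c' => [|||||||v'|v'|] //= h h' hd hd';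
  rewrite -hd in hd'; try discriminate hd'; try done;
  case: hd => <- <- <- he.
- by case: (not_sm_equiv_C5_C6 he).
- by case: (not_sm_equiv_C5_C6 (sm_equiv_sym he)).
- by rewrite h h'.
- by rewrite h in he; case: (not_sm_equiv_CD_CA0 (sm_equiv_sym he)).
- by rewrite h' in he; case: (not_sm_equiv_CD_CA0 he).
Qed.

Lemma closed_field_sqrt (v : F) : GRing.closed_field_axiom F -> exists s, s ^+ 2 = v.
Proof.
move=> cl; have [s hs] := cl 2%N (fun i => if i == 0%N then v else 0) isT.
by exists s; rewrite hs !big_ord_recl big_ord0 /= expr0 mulr1 mul0r !addr0.
Qed.

Lemma closed_field_root2 (v : F) : GRing.closed_field_axiom F ->
  exists s, v + s + s ^+ 2 = 0.
Proof.
move=> cl; have [s hs] := cl 2%N (fun i => if i == 0%N then - v else - 1) isT.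
exists s; move: hs; rewrite !big_ord_recl big_ord0 /= expr0 expr1 mulr1 addr0 => ->.
ring.
Qed.

Lemma closed_canon_ac_equiv m n q (c : canon F) : GRing.closed_field_axiom F ->
  in_list c -> cdims c = (m, n, q) ->
  exists c', [/\ in_list_ac c', cdims c' = (m, n, q) &
                 sm_equiv (csmat c m n q) (csmat c' m n q)].
Proof.
move=> cl hc hd.
have self : in_list_ac c -> exists c', [/\ in_list_ac c', cdims c' = (m, n, q) &
                                         sm_equiv (csmat c m n q) (csmat c' m n q)].
  by exists c; split=> //; apply: sm_equiv_refl.
move: self hc hd; case: c => [|||||||v|v|] //= self hc hd; try exact: self.
- case: hd => <- <- <-; have [s hs] := closed_field_sqrt v cl.
  have [ch2|nch2] := boolP (2%N \in [pchar F]).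
    exists (CA 0); split=> //.
    have := sm_equiv_CA_moebius (v := v) (a := 1) (b := 0) (c := s) (d := 1) ch2.
    have -> : (1 ^+ 2 * v + s ^+ 2) / (0 ^+ 2 * v + 1 ^+ 2) = 0.
      have -> : 1 ^+ 2 * v + s ^+ 2 = 2%:R * v by rewrite hs; ring.
      by rewrite pcharf0 // !mul0r.
    by apply; apply: contra_neq (oner_neq0 F) => <-; ring.
  have [s0|s0] := eqVneq s 0.
    by exists (CA 0); split=> //; rewrite -hs s0 expr0n; apply: sm_equiv_refl.
  exists CD; split=> //; rewrite -hs; apply: sm_equiv_sym.
  by apply: sm_equiv_CD_CA_square => //; apply/negP.
- case: hd => <- <- <-; have [s hs] := closed_field_root2 v cl.
  exists CD; split=> //; apply: (sm_equiv_trans (sm_equiv_CB_shift v s hc)).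
  by rewrite hs; apply: sm_equiv_sym; apply: sm_equiv_CD_CB0.
Qed.

Lemma regular_canon_ac_unique : GRing.closed_field_axiom F ->
   forall (m n q : nat) (A : smat F m n q),
     (0 < m)%N -> (0 < n)%N -> (0 < q)%N -> (n <= 2)%N -> (q <= 2)%N ->
     sm_regular A ->
     exists c : canon F, [/\ in_list_ac c, equiv_to A c &
       forall c' : canon F, in_list_ac c' -> equiv_to A c' -> c' = c].
Proof.
move=> cl m n q A hm hn hq hn2 hq2 reg.
have [c0 [hc0 [hd0 he0]]] := regular_canon_exists hm hn hq hn2 hq2 reg.
have [c [hc hd he]] := closed_canon_ac_equiv cl hc0 hd0.
exists c; split=> [||c' hc' [hd' he']]; first by [].
  by split=> //; apply: sm_equiv_trans he0 he.
apply: (canon_ac_uniq hc hc' hd hd').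
exact: sm_equiv_trans (sm_equiv_sym (sm_equiv_trans he0 he)) he'.
Qed.

End Final.


Unset Implicit Arguments.

Theorem theorem2 (F : fieldType) :
  (forall (m n q : nat) (A : smat F m n q),
     (0 < m)%N -> (0 < n)%N -> (0 < q)%N -> (n <= 2)%N -> (q <= 2)%N ->
     sm_regular A -> exists c : canon F, in_list c /\ equiv_to A c)
  /\
  (forall c c' : canon F, in_list c -> in_list c' ->
     (cequiv c c' <-> (c = c' \/ exception c c')))
  /\
  (GRing.closed_field_axiom F ->
   forall (m n q : nat) (A : smat F m n q),
     (0 < m)%N -> (0 < n)%N -> (0 < q)%N -> (n <= 2)%N -> (q <= 2)%N ->
     sm_regular A ->
     exists c : canon F, [/\ in_list_ac c, equiv_to A c &
       forall c' : canon F, in_list_ac c' -> equiv_to A c' -> c' = c]).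
Proof.
split; first by move=> m n q A; apply: regular_canon_exists.
split; first by move=> c c'; apply: canon_cequivP.
exact: regular_canon_ac_unique.
Qed.
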